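(* Let $B$ be a C*-algebra and let $A$ be a closed *-subalgebra of $B$ satisfying the ideal intersection property and axiom (inv) relative to $B$. Let $\mathscr{R}(B)$ be the family of all regular ideals of $B$, and $\mathscr{R}_{\mathrm{inv}}(A)$ the family of all regular, $B$-invariant ideals of $A$. Then the map $$\alpha: J\in\mathscr{R}(B)\mapsto J\cap A\in\mathscr{R}_{\mathrm{inv}}(A)$$ is well defined and is a boolean algebra isomorphism (an inclusion-preserving bijection with inclusion-preserving inverse), and its inverse is given by $$\beta: I\in\mathscr{R}_{\mathrm{inv}}(A)\mapsto \mathrm{Ann}_B(\mathrm{Ann}_B(I))\in\mathscr{R}(B).$$
   Context: Ideals are closed two-sided ideals. For a C*-algebra $C$ and $S\subseteq C$, $[S]$ is the closed linear span, and $S$ is $C$-invariant if $[SC]=[CS]$. For $C$-invariant $S$, $\{x\in C: xs=0\ \forall s\in S\}=\{x\in C: sx=0\ \forall s\in S\}$, denoted $\mathrm{Ann}_C(S)$ (every ideal of $C$ is $C$-invariant). An ideal $J$ of $C$ is regular if $\mathrm{Ann}_C(\mathrm{Ann}_C(J))=J$. Regular ideals of $C$ form a boolean algebra with order given by inclusion, meet $J_1\cap J_2$, join $\mathrm{Ann}_C(\mathrm{Ann}_C(J_1+J_2))$ and negation $\mathrm{Ann}_C(J)$. $A$ satisfies the ideal intersection property relative to $B$ if $J\cap A\neq\{0\}$ for every nonzero ideal $J$ of $B$; $A$ satisfies axiom (inv) relative to $B$ if $J\cap A$ is $B$-invariant for every ideal $J$ of $B$. *)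

From HB Require Import structures.
From mathcomp Require Import all_boot all_order all_algebra.
From mathcomp Require Import all_classical all_reals all_analysis.
From mathcomp Require Import complex.
Set Implicit Arguments.
Unset Strict Implicit.
Unset Printing Implicit Defensive.
Import Order.TTheory GRing.Theory Num.Theory.
Local Open Scope classical_set_scope.
Local Open Scope ring_scope.
Local Open Scope complex_scope.

Record is_cstar_algebra (R : realType) (U : completeNormedModType R[i])
    (mul : U -> U -> U) (star : U -> U) : Prop := IsCStarAlgebra {
  mulA : forall x y z, mul x (mul y z) = mul (mul x y) z;
  mulDl : forall x y z, mul (x + y) z = mul x z + mul y z;
  mulDr : forall x y z, mul x (y + z) = mul x y + mul x z;
  mulZl : forall (a : R[i]) x y, mul (a *: x) y = a *: mul x y;
  mulZr : forall (a : R[i]) x y, mul x (a *: y) = a *: mul x y;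
  starK : forall x, star (star x) = x;
  starD : forall x y, star (x + y) = star x + star y;
  starZ : forall (a : R[i]) x, star (a *: x) = a^* *: star x;
  starM : forall x y, star (mul x y) = mul (star y) (star x);
  normM : forall x y, `|mul x y| <= `|x| * `|y|;
  norm_cstar : forall x, `|mul (star x) x| = `|x| ^+ 2
}.

Section Defs.
Context {R : realType} {U : completeNormedModType R[i]}.
Variables (mul : U -> U -> U) (star : U -> U).

Definition closed_star_subalg (A : set U) : Prop :=
  [/\ A 0,
      (forall x y, A x -> A y -> A (x + y)),
      (forall (a : R[i]) x, A x -> A (a *: x)),
      (forall x y, A x -> A y -> A (mul x y)) /\
      (forall x, A x -> A (star x)) &
      closed A].

Definition lin_span (S : set U) : set U :=
  [set x | exists n (c : 'I_n -> R[i]) (s : 'I_n -> U),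
             (forall i, S (s i)) /\ x = \sum_(i < n) c i *: s i].
Definition clspan (S : set U) : set U := closure (lin_span S).

Definition prodset (S T : set U) : set U :=
  [set x | exists s t, [/\ S s, T t & x = mul s t]].

Definition is_invariant (C S : set U) : Prop :=
  clspan (prodset S C) = clspan (prodset C S).

Definition closed_ideal (C J : set U) : Prop :=
  [/\ J `<=` C, J 0,
      (forall x y, J x -> J y -> J (x + y)),
      (forall (a : R[i]) x, J x -> J (a *: x)) /\
      (forall c x, C c -> J x -> J (mul c x) /\ J (mul x c)) &
      closed J].

Definition Ann (C S : set U) : set U :=
  [set x | C x /\ forall s, S s -> mul x s = 0].

Definition regular_ideal (C J : set U) : Prop :=
  closed_ideal C J /\ Ann C (Ann C J) = J.

Definition ideal_intersection_property (A B : set U) : Prop :=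
  forall J, closed_ideal B J -> J <> [set 0] -> J `&` A <> [set 0].

Definition axiom_inv (A B : set U) : Prop :=
  forall J, closed_ideal B J -> is_invariant B (J `&` A).

End Defs.

(** A C*-algebra has no nonzero [a] with [a (a^* a) = 0]: then
    [(a^* a) (a^* a) = 0], and the C*-identity kills first [a^* a], then [a].
    Consequently the left annihilator of an ideal [K] of [B] is also a right
    annihilator, so [K <= Ann_B (Ann_B K)] and [Ann_B^3 = Ann_B] on ideals.
    The heart of the matter is [Ann_B (J `&` A) = Ann_B J] for an ideal [J]
    of [B]: by (inv) the left side is an ideal of [B], and its intersection
    with [J] meets [A] only in [0], since an [a] there kills [a^* a], which
    lies in [J `&` A]; by the ideal intersection property that intersection
    is [0].  Together with [Ann_A S = Ann_B S `&` A] this makes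
    [J |-> J `&` A] and [I |-> Ann_B (Ann_B I)] mutually inverse. *)

From Pilot Require Import Defs.
From HB Require Import structures.
From mathcomp Require Import all_boot all_order all_algebra.
From mathcomp Require Import all_classical all_reals all_analysis.
From mathcomp Require Import complex.
Import Order.TTheory GRing.Theory Num.Theory.
Set Implicit Arguments.
Unset Strict Implicit.
Local Open Scope classical_set_scope.
Local Open Scope ring_scope.

Lemma lipschitz_continuous (K : numFieldType) (V W : normedModType K)
    (f : V -> W) (k : K) : 0 <= k ->
  (forall z w, `|f z - f w| <= k * `|z - w|) -> continuous f.
Proof.
move=> k_ge0 f_lip z; apply/cvgrPdist_lt => e e_gt0.
have k1_gt0 : 0 < k + 1 by rewrite ltr_wpDl.
have d_gt0 : 0 < e / (k + 1) by rewrite divr_gt0.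
apply: filterS (nbhsx_ballx z _ d_gt0) => w; rewrite -ball_normE /= => zw.
apply: le_lt_trans (f_lip z w) _.
apply: (@le_lt_trans _ _ ((k + 1) * `|z - w|)).
  by rewrite ler_wpM2r // lerDl.
by rewrite mulrC -ltr_pdivlMr.
Qed.

Lemma closed_lipschitz_zeros (K : numFieldType) (V W : normedModType K)
    (f : V -> W) (k : K) : 0 <= k ->
  (forall z w, `|f z - f w| <= k * `|z - w|) -> closed [set z | f z = 0].
Proof.
move=> k_ge0 /(lipschitz_continuous k_ge0) f_cont.
have closed0 : closed [set (0 : W)].
  exact/accessible_closed_set1/hausdorff_accessible/norm_hausdorff.
exact: (preimage_closed (fun z _ => f_cont z) closed0).
Qed.

Section Ideals.
Variables (R : realType) (U : completeNormedModType R[i]) (mul : U -> U -> U).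

Lemma AnnE (C S : set U) : Ann mul C S = Ann mul setT S `&` C.
Proof. by apply/seteqP; split=> x /= [] //= [] _. Qed.

Lemma AnnS (C S T : set U) : S `<=` T -> Ann mul C T `<=` Ann mul C S.
Proof. by move=> ST x [Cx xT]; split=> // s /ST; exact: xT. Qed.

Lemma closed_idealI (C J1 J2 : set U) :
  closed_ideal mul C J1 -> closed_ideal mul C J2 ->
  closed_ideal mul C (J1 `&` J2).
Proof.
move=> [CJ1 J1_0 J1_add [J1_scale J1_mul] J1_closed].
move=> [_ J2_0 J2_add [J2_scale J2_mul] J2_closed]; split.
- by move=> x [/CJ1].
- by [].
- by move=> x y [J1x J2x] [J1y J2y]; split; [exact: J1_add | exact: J2_add].
- split=> [a x [J1x J2x]|c x Cc [J1x J2x]]; first by split; auto.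
  by have [? ?] := J1_mul c x Cc J1x; have [? ?] := J2_mul c x Cc J2x.
- exact: closedI.
Qed.

Lemma closed_ideal_setI_subalg (star : U -> U) (C J A : set U) :
  closed_ideal mul C J -> closed_star_subalg mul star A -> A `<=` C ->
  closed_ideal mul A (J `&` A).
Proof.
move=> [_ J0 J_add [J_scale J_mul] J_closed].
move=> [A0 A_add A_scale [A_mul _] A_closed] AC; split.
- by move=> x [].
- by [].
- by move=> x y [Jx Ax] [Jy Ay]; split; [exact: J_add | exact: A_add].
- split=> [a x [Jx Ax]|c x Ac [Jx Ax]]; first by split; auto.
  by have [? ?] := J_mul c x (AC c Ac) Jx; split; split=> //; exact: A_mul.
- exact: closedI.
Qed.

End Ideals.

Section CStarAlgebra.
Variables (R : realType) (U : completeNormedModType R[i]).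
Variables (mul : U -> U -> U) (star : U -> U).
Hypothesis cstar : is_cstar_algebra mul star.

Local Notation AnnB := (Ann mul setT).
Local Notation idealB := (closed_ideal mul setT).

Let mulA := Defs.mulA cstar.
Let mulDl := Defs.mulDl cstar.
Let mulDr := Defs.mulDr cstar.
Let mulZl := Defs.mulZl cstar.
Let mulZr := Defs.mulZr cstar.
Let starK := Defs.starK cstar.
Let starM := Defs.starM cstar.
Let normM := Defs.normM cstar.

Lemma mul0x y : mul 0 y = 0.
Proof. by rewrite -(scale0r (0 : U)) mulZl !scale0r. Qed.

Lemma mulx0 x : mul x 0 = 0.
Proof. by rewrite -(scale0r (0 : U)) mulZr !scale0r. Qed.

Lemma mulBr x y z : mul x (y - z) = mul x y - mul x z.
Proof. by rewrite mulDr -scaleN1r mulZr scaleN1r. Qed.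

Lemma mulBl x y z : mul (y - z) x = mul y x - mul z x.
Proof. by rewrite mulDl -scaleN1r mulZl scaleN1r. Qed.

Lemma cstar_eq0 x : mul (star x) x = 0 -> x = 0.
Proof.
move=> xx0; have /eqP := Defs.norm_cstar cstar x.
by rewrite xx0 normr0 eq_sym expf_eq0 /= normr_eq0 => /eqP.
Qed.

Lemma mul_adjoint_cube_eq0 a : mul a (mul (star a) a) = 0 -> a = 0.
Proof.
move=> aaa0; apply: cstar_eq0; set h := mul (star a) a.
have h_sa : star h = h by rewrite /h starM starK.
by apply: cstar_eq0; rewrite h_sa {1}/h -mulA aaa0 mulx0.
Qed.

Lemma mul_clspan_eq0 (P : set U) x z :
  (forall p, P p -> mul x p = 0) -> clspan P z -> mul x z = 0.
Proof.
move=> xP Pz.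
have mulx_lip w w' : `|mul x w - mul x w'| <= `|x| * `|w - w'|.
  by rewrite -mulBr normM.
apply: (closed_lipschitz_zeros (normr_ge0 x) mulx_lip); apply: closureS Pz.
move=> _ [n [c [s [Ps ->]]]] /=.
apply: (big_ind (fun w => mul x w = 0)); first exact: mulx0.
  by move=> w w' xw0 xw'0; rewrite mulDr xw0 xw'0 addr0.
by move=> i _; rewrite mulZr xP // scaler0.
Qed.

Lemma Ann_closed (S : set U) : closed (AnnB S).
Proof.
move=> x x_cl; split=> // s Ss.
have muls_lip w w' : `|mul w s - mul w' s| <= `|s| * `|w - w'|.
  by rewrite -mulBl mulrC normM.
apply: (closed_lipschitz_zeros (normr_ge0 s) muls_lip); apply: closureS x_cl.
by move=> w [_ wS]; exact: wS.
Qed.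

Lemma Ann_closed_ideal (S : set U) :
  (forall x c s, AnnB S x -> S s -> mul x (mul c s) = 0) -> idealB (AnnB S).
Proof.
move=> Ann_kills_BS; split=> //.
- by split=> // s _; rewrite mul0x.
- by move=> x y [_ xS] [_ yS]; split=> // s Ss; rewrite mulDl xS // yS // addr0.
- split=> [a x [_ xS]|c x _ x_ann].
    by split=> // s Ss; rewrite mulZl xS // scaler0.
  split; split=> // s Ss; rewrite -mulA; last exact: Ann_kills_BS.
  by rewrite x_ann.2 // mulx0.
- exact: Ann_closed.
Qed.

Lemma Ann_ideal (J : set U) : idealB J -> idealB (AnnB J).
Proof.
move=> [_ _ _ [_ J_mul] _]; apply: Ann_closed_ideal => x c s [_ xJ] Js.
exact/xJ/(J_mul c s I Js).1.
Qed.

Lemma Ann_invariant (S : set U) : is_invariant mul setT S -> idealB (AnnB S).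
Proof.
move=> S_inv; apply: Ann_closed_ideal => x c s [_ xS] Ss.
have : clspan (prodset mul setT S) (mul c s).
  apply: subset_closure; exists 1%N, (fun _ => 1), (fun _ => mul c s).
  by split; [exists c, s | rewrite big_ord1 scale1r].
rewrite -S_inv; apply: mul_clspan_eq0.
by move=> _ [s' [b [Ss' _ ->]]]; rewrite mulA xS // mul0x.
Qed.

Lemma mul_ideal_Ann_eq0 (K : set U) x y :
  idealB K -> K x -> AnnB K y -> mul x y = 0.
Proof.
move=> [_ _ _ [_ K_mul] _] Kx [_ yK].
(* [(x y) ((x y)^* (x y)) = x ((y w) y)] with [w := y^* (x^* x)] in [K]. *)
set w := mul (star y) (mul (star x) x).
have yw0 : mul y w = 0 by apply/yK/(K_mul _ _ I (K_mul _ x I Kx).1).1.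
apply: mul_adjoint_cube_eq0.
rewrite starM -!mulA (mulA (star x)) (mulA (star y)) -/w (mulA y) yw0.
by rewrite mul0x mulx0.
Qed.

Lemma ideal_sub_AnnK (K : set U) : idealB K -> K `<=` AnnB (AnnB K).
Proof. by move=> K_ideal x Kx; split=> // y; exact: mul_ideal_Ann_eq0. Qed.

Lemma Ann3_ideal (K : set U) : idealB K -> AnnB (AnnB (AnnB K)) = AnnB K.
Proof.
move=> K_ideal; apply/seteqP; split.
  exact/AnnS/ideal_sub_AnnK.
exact/ideal_sub_AnnK/Ann_ideal.
Qed.

Lemma regular_ideal_AnnK (I : set U) :
  is_invariant mul setT I -> regular_ideal mul setT (AnnB (AnnB I)).
Proof.
move=> /Ann_invariant AnnI_ideal.
by split; [exact: Ann_ideal | exact: Ann3_ideal].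
Qed.

Section Subalgebra.
Variable A : set U.
Hypotheses (A_subalg : closed_star_subalg mul star A)
  (A_iip : ideal_intersection_property mul A setT)
  (A_inv : axiom_inv mul A setT).

Lemma Ann_setI_subalg (J : set U) : idealB J -> AnnB (J `&` A) = AnnB J.
Proof.
move=> J_ideal; apply/seteqP; split; last by apply: AnnS => x [].
have K_ideal : idealB (AnnB (J `&` A)) := Ann_invariant (A_inv J_ideal).
have [_ K0 _ [_ K_mul] _] := K_ideal.
have [_ J0 _ [_ J_mul] _] := J_ideal.
have [A0 _ _ [A_mul A_star] _] := A_subalg.
have KJ_eq0 : AnnB (J `&` A) `&` J = [set 0].
  apply: contrapT => KJ_neq0.
  apply: (A_iip (closed_idealI K_ideal J_ideal) KJ_neq0).
  apply/seteqP; split=> [a [[[_ a_JA] Ja] Aa] | _ ->] //=.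
  apply: mul_adjoint_cube_eq0; apply: a_JA; split.
    exact: (J_mul (star a) a I Ja).1.
  exact: A_mul (A_star a Aa) Aa.
move=> y Ky; split=> // s Js.
have : (AnnB (J `&` A) `&` J) (mul y s).
  by split; [exact: (K_mul s y I Ky).2 | exact: (J_mul y s I Js).1].
by rewrite KJ_eq0.
Qed.

Lemma AnnA_setI_subalg (J : set U) :
  idealB J -> Ann mul A (J `&` A) = AnnB J `&` A.
Proof. by move=> J_ideal; rewrite AnnE Ann_setI_subalg. Qed.

Lemma regular_ideal_setI_subalg (J : set U) :
  regular_ideal mul setT J -> regular_ideal mul A (J `&` A).
Proof.
move=> [J_ideal J_reg]; split.
  exact: closed_ideal_setI_subalg J_ideal A_subalg _.
by rewrite !AnnA_setI_subalg ?J_reg //; exact: Ann_ideal.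
Qed.

Lemma AnnK_setI_subalg (J : set U) :
  regular_ideal mul setT J -> AnnB (AnnB (J `&` A)) = J.
Proof. by move=> [J_ideal J_reg]; rewrite Ann_setI_subalg. Qed.

Lemma setI_subalg_AnnK (I : set U) : regular_ideal mul A I ->
  is_invariant mul setT I -> AnnB (AnnB I) `&` A = I.
Proof.
move=> [_ I_reg] /Ann_invariant AnnI_ideal.
by rewrite -AnnA_setI_subalg // -AnnE.
Qed.

End Subalgebra.

End CStarAlgebra.

Theorem theorem3p5 (R : realType) (U : completeNormedModType R[i])
    (mul : U -> U -> U) (star : U -> U) (A : set U) :
  is_cstar_algebra mul star ->
  closed_star_subalg mul star A ->
  ideal_intersection_property mul A setT ->
  axiom_inv mul A setT ->
  (* alpha : J |-> J ∩ A is well defined R(B) -> R_inv(A) *)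
  (forall J, regular_ideal mul setT J ->
     regular_ideal mul A (J `&` A) /\ is_invariant mul setT (J `&` A)) /\
  (* beta : I |-> Ann_B(Ann_B(I)) is well defined R_inv(A) -> R(B) *)
  (forall I, regular_ideal mul A I -> is_invariant mul setT I ->
     regular_ideal mul setT (Ann mul setT (Ann mul setT I))) /\
  (* beta o alpha = id on R(B) *)
  (forall J, regular_ideal mul setT J -> Ann mul setT (Ann mul setT (J `&` A)) = J) /\
  (* alpha o beta = id on R_inv(A) *)
  (forall I, regular_ideal mul A I -> is_invariant mul setT I ->
     Ann mul setT (Ann mul setT I) `&` A = I) /\
  (* alpha preserves inclusion *)
  (forall J1 J2, regular_ideal mul setT J1 -> regular_ideal mul setT J2 ->
     J1 `<=` J2 -> J1 `&` A `<=` J2 `&` A) /\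
  (* beta = alpha^-1 preserves inclusion *)
  (forall I1 I2, regular_ideal mul A I1 -> is_invariant mul setT I1 ->
     regular_ideal mul A I2 -> is_invariant mul setT I2 ->
     I1 `<=` I2 -> Ann mul setT (Ann mul setT I1) `<=` Ann mul setT (Ann mul setT I2)).
Proof.
move=> cstar A_subalg A_iip A_inv.
split; [|split; [|split; [|split; [|split]]]].
- move=> J J_reg; split; last exact: A_inv J_reg.1.
  exact: (regular_ideal_setI_subalg cstar A_subalg A_iip A_inv J_reg).
- by move=> I _ I_inv; exact: (regular_ideal_AnnK cstar I_inv).
- exact: (AnnK_setI_subalg cstar A_subalg A_iip A_inv).
- exact: (setI_subalg_AnnK cstar A_subalg A_iip A_inv).
- by move=> J1 J2 _ _; exact: setSI.
- by move=> I1 I2 _ _ _ _ I12; apply/AnnS/AnnS.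
Qed.
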